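(* Let $b>1$. Assume that for any $L$, any anytime neural network (ANN) of depth $L$ has anytime predictions at every depth $i > \frac{L}{b}$ that are competitive against the optimal predictor of depth $i$. Consider the EANN built from ANNs of exponentially increasing depths $b^0, b^1, b^2, \dots$, as described in the context. Then after $B$ layers of computation, the EANN produces anytime predictions that are competitive against the optimal predictor of depth $\frac{B}{C}$ for some $C>1$ (depending on $B$), such that $$\sup_B C = 2 + \frac{1}{b-1},$$ and $C$ has expectation $$E_{B\sim \mathrm{uniform}(1,L)}[C] \le 1 - \frac{1}{2b} + \frac{1+\ln(b)}{b-1},$$ where $L$ denotes the total number of layers of the EANN.
   Context: An anytime neural network (ANN) of depth $L$ is a feed-forward network computing feature maps $x_1,\dots,x_L$ layer by layer, with an auxiliary prediction attached to the feature maps, so that after computing $i$ layers a prediction is available. The ''optimal of depth $i$'' means the predictor obtained by training a network of depth $i$ (cost $i$ layers) only for its final prediction; a prediction is ''competitive against the optimal of depth $d$'' if its quality is comparable to that optimal predictor. Cost is measured in number of layers computed. An EANN (ensemble of exponentially deepening ANNs) consists of ANNs numbered $1,2,3,\dots$, where ANN number $n+1$ has depth $b^{n}$ (so ANN 1 has depth $1$). The ANNs are computed sequentially in order of depth; ANN $n+1$ starts only after ANNs $1,\dots,n$ are fully computed. Thus after $B$ layers of computation, with $B = z + \sum_{i=0}^{n-1} b^i$ where $0 < z \le b^n$, the EANN is at depth $z$ of ANN number $n+1$. At that moment the EANN outputs the anytime prediction of ANN $n+1$ at depth $z$ if $z > b^{n-1}$ (which by assumption is competitive with the optimal of depth $z$),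 and otherwise reuses the final prediction of ANN number $n$ (of depth $b^{n-1}$, competitive with the optimal of depth $b^{n-1}$). The quantity $C$ is the ratio of the consumed budget $B$ to the depth of the optimal predictor that the EANN's current prediction is competitive against. *)

From Stdlib Require Import Reals Lra ClassicalEpsilon.
From Coquelicot Require Import Coquelicot.
Open Scope R_scope.

(* geom b n = sum_{i=0}^{n-1} b^i : total number of layers of ANNs 1..n
   (ANN number k+1 has depth b^k). *)
Fixpoint geom (b : R) (n : nat) : R :=
  match n with
  | O => 0
  | S k => geom b k + b ^ k
  end.

(* After a budget of B layers, the EANN is inside ANN number n+1, where n is
   the (unique) index with  B = z + geom b n,  0 < z <= b^n,
   i.e.  geom b n < B <= geom b (S n). *)
Definition eann_index (b B : R) : nat :=
  epsilon (inhabits O) (fun n => geom b n < B <= geom b (S n)).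

(* z : the depth reached inside the current ANN *)
Definition eann_z (b B : R) : R := B - geom b (eann_index b B).

(* Depth of the optimal predictor that the current EANN prediction is
   competitive against: z if z > b^(n-1) (anytime prediction of ANN n+1,
   competitive by assumption), otherwise b^(n-1) (final prediction of ANN n).
   For n = 0 (first ANN, depth 1), the prediction at depth z is used. *)
Definition eann_depth (b B : R) : R :=
  match eann_index b B with
  | O => eann_z b B
  | S m => if Rlt_dec (b ^ m) (eann_z b B) then eann_z b B else b ^ m
  end.

Definition eann_C (b B : R) : R := B / eann_depth b B.

From Stdlib Require Import Reals Lra Lia ClassicalEpsilon.
From Coquelicot Require Import Coquelicot.
Open Scope R_scope.

(* While running ANN number m+2 (of depth b^(m+1)), which starts after
   g = geom b (m+1) layers, the EANN reuses the depth-b^m prediction of ANN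
   m+1 as long as B <= g + b^m, so that C = B / b^m, and afterwards uses the
   anytime prediction at depth B - g, so that C = B / (B - g).  Both pieces
   peak at the switch point B = g + b^m, where C = 2 + 1/(b-1) - 1/((b-1) b^m)
   because g = (b^(m+1) - 1)/(b-1); these peaks increase to 2 + 1/(b-1).
   The integrals of the two pieces are g + b^m/2 and (b-1) b^m + g ln b, and
   the bound g <= b^(m+1)/(b-1) shows that the mean of C over the whole
   segment, of length b^(m+1), is at most 1 - 1/(2b) + (1 + ln b)/(b-1).
   The mean over [1, geom b (N+1)] is a weighted mean of these means. *)

Lemma is_RInt_antiderivative (f F dF : R -> R) (a c l : R) :
  a <= c ->
  (forall x, a < x < c -> f x = dF x) ->
  (forall x, a <= x <= c -> is_derive F x (dF x)) ->
  (forall x, a <= x <= c -> continuous dF x) ->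
  l = F c - F a ->
  is_RInt f a c l.
Proof.
  intros Hac Hf HF HdF ->.
  apply (is_RInt_ext dF).
  - rewrite Rmin_left, Rmax_right by exact Hac.
    intros x Hx; symmetry; exact (Hf x Hx).
  - apply (is_RInt_derive F dF); rewrite Rmin_left, Rmax_right by exact Hac; assumption.
Qed.

Section EANN.

Variable b : R.
Hypothesis hb : 1 < b.

Lemma geomS n : geom b (S n) = geom b n + b ^ n.
Proof. reflexivity. Qed.

Lemma pow_b_gt0 n : 0 < b ^ n.
Proof. apply pow_lt; lra. Qed.

Lemma geom_closed n : geom b n = (b ^ n - 1) / (b - 1).
Proof.
  induction n as [|n IH]; simpl; [field; lra|].
  rewrite IH; field; lra.
Qed.

Lemma geom_S_le n : geom b (S n) * (b - 1) <= b * b ^ n.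
Proof. rewrite geom_closed; simpl; field_simplify; lra. Qed.

Lemma geom_le n m : (n <= m)%nat -> geom b n <= geom b m.
Proof.
  induction 1 as [|m _ IH]; [lra|].
  rewrite geomS; pose proof (pow_b_gt0 m); lra.
Qed.

Lemma pow_le_geom_S n : b ^ n <= geom b (S n).
Proof. rewrite geomS; pose proof (geom_le 0 n (Nat.le_0_l n)); simpl in *; lra. Qed.

Lemma pow_unbounded M : exists n, M <= b ^ n.
Proof.
  destruct (Pow_x_infinity b) with (b := M) as [n Hn]; [rewrite Rabs_pos_eq; lra|].
  exists n; specialize (Hn n (le_n n)).
  rewrite Rabs_pos_eq in Hn; [lra|left; apply pow_b_gt0].
Qed.

Lemma eann_index_eq n B : geom b n < B <= geom b (S n) -> eann_index b B = n.
Proof.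
  intros HB; unfold eann_index.
  pose proof (epsilon_spec (inhabits O) (fun n => geom b n < B <= geom b (S n))
    (ex_intro _ n HB)) as Hk.
  set (k := epsilon _ _) in *.
  destruct (Nat.lt_trichotomy k n) as [Hkn|[-> |Hnk]]; [|reflexivity|].
  - pose proof (geom_le (S k) n Hkn); lra.
  - pose proof (geom_le (S n) k Hnk); lra.
Qed.

Lemma geom_bracket B : 1 < B -> exists m, geom b (S m) < B <= geom b (S (S m)).
Proof.
  intros HB.
  assert (Hsegment : forall N, B <= geom b (S N) ->
            exists m, geom b (S m) < B <= geom b (S (S m))).
  { induction N as [|N IH]; intros HN; [simpl in HN; lra|].
    destruct (Rle_dec B (geom b (S N))) as [Hle|Hgt]; [now apply IH|].
    exists N; lra. }
  destruct (pow_unbounded B) as [N HN].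
  apply (Hsegment N); pose proof (pow_le_geom_S N); lra.
Qed.

Lemma eann_C_1 : eann_C b 1 = 1.
Proof.
  unfold eann_C, eann_depth, eann_z.
  rewrite (eann_index_eq 0 1) by (simpl; lra); simpl.
  field.
Qed.

Lemma eann_C_reuse m B :
  geom b (S m) < B <= geom b (S m) + b ^ m -> eann_C b B = B / b ^ m.
Proof.
  intros HB; unfold eann_C, eann_depth, eann_z.
  assert (Hpow : b ^ m <= b ^ S m) by (apply Rle_pow; [lra|lia]).
  rewrite (eann_index_eq (S m) B) by (rewrite (geomS (S m)); lra).
  destruct (Rlt_dec (b ^ m) (B - geom b (S m))); [lra|reflexivity].
Qed.

Lemma eann_C_anytime m B :
  geom b (S m) + b ^ m < B <= geom b (S (S m)) ->
  eann_C b B = B / (B - geom b (S m)).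
Proof.
  intros HB; unfold eann_C, eann_depth, eann_z.
  pose proof (pow_b_gt0 m).
  rewrite (eann_index_eq (S m) B) by lra.
  destruct (Rlt_dec (b ^ m) (B - geom b (S m))); [reflexivity|lra].
Qed.

Lemma eann_C_gt1 B : 1 < B -> 1 < eann_C b B.
Proof.
  intros HB; destruct (geom_bracket B HB) as [m Hm].
  pose proof (pow_le_geom_S m); pose proof (pow_b_gt0 m).
  destruct (Rle_dec B (geom b (S m) + b ^ m)) as [Hreuse|Hany].
  - rewrite (eann_C_reuse m B) by lra.
    apply Rlt_div_r; lra.
  - rewrite (eann_C_anytime m B) by lra.
    apply Rlt_div_r; lra.
Qed.

Lemma div_le_C_sup x d :
  0 < d -> x * (b - 1) <= (2 * b - 1) * d -> x / d <= 2 + 1 / (b - 1).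
Proof.
  intros Hd Hx; apply Rle_div_l; [lra|].
  apply Rmult_le_reg_r with (b - 1); [lra|].
  replace ((2 + 1 / (b - 1)) * d * (b - 1)) with ((2 * b - 1) * d) by (field; lra).
  exact Hx.
Qed.

Lemma eann_C_le B : 1 <= B -> eann_C b B <= 2 + 1 / (b - 1).
Proof.
  intros HB; destruct (Req_dec B 1) as [->|HB1].
  { rewrite eann_C_1; enough (0 < 1 / (b - 1)) by lra; apply Rdiv_lt_0_compat; lra. }
  destruct (geom_bracket B ltac:(lra)) as [m Hm].
  pose proof (pow_b_gt0 m); pose proof (geom_S_le m).
  destruct (Rle_dec B (geom b (S m) + b ^ m)) as [Hreuse|Hany].
  - rewrite (eann_C_reuse m B) by lra.
    apply div_le_C_sup; nra.
  - rewrite (eann_C_anytime m B) by lra.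
    apply div_le_C_sup; nra.
Qed.

Lemma eann_C_switch m :
  eann_C b (geom b (S m) + b ^ m) = 2 + 1 / (b - 1) - 1 / ((b - 1) * b ^ m).
Proof.
  pose proof (pow_b_gt0 m).
  rewrite (eann_C_reuse m) by lra.
  rewrite geom_closed; simpl; field; lra.
Qed.

Lemma eann_C_lub :
  is_lub (fun c => exists B, 1 <= B /\ c = eann_C b B) (2 + 1 / (b - 1)).
Proof.
  split; [intros c [B [HB ->]]; exact (eann_C_le B HB)|].
  intros M HM; apply Rnot_lt_le; intros HMK.
  set (e := 2 + 1 / (b - 1) - M).
  destruct (pow_unbounded (2 / ((b - 1) * e))) as [m Hm].
  pose proof (pow_b_gt0 m); pose proof (pow_le_geom_S m).
  assert (Hswitch : eann_C b (geom b (S m) + b ^ m) <= M).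
  { apply HM; exists (geom b (S m) + b ^ m); split; [|reflexivity].
    pose proof (pow_R1_Rle b m (Rlt_le _ _ hb)); lra. }
  rewrite eann_C_switch in Hswitch.
  apply Rle_div_l in Hm; [|apply Rmult_lt_0_compat; unfold e; lra].
  assert (Hsmall : e * ((b - 1) * b ^ m) <= 1).
  { apply Rle_div_r; [apply Rmult_lt_0_compat|unfold e]; lra. }
  nra.
Qed.

Lemma is_RInt_eann_C_reuse m :
  is_RInt (eann_C b) (geom b (S m)) (geom b (S m) + b ^ m)
    (geom b (S m) + b ^ m / 2).
Proof.
  pose proof (pow_b_gt0 m) as Hp.
  set (g := geom b (S m)) in *; set (p := b ^ m) in *.
  apply (is_RInt_antiderivative _ (fun x => x * x / (2 * p)) (fun x => x / p)).
  - lra.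
  - intros x Hx; apply eann_C_reuse; unfold g, p in Hx; lra.
  - intros x _; auto_derive; [lra|field; lra].
  - intros x _; apply (ex_derive_continuous (V := R_NormedModule)); auto_derive; lra.
  - field; lra.
Qed.

Lemma is_RInt_eann_C_anytime m :
  is_RInt (eann_C b) (geom b (S m) + b ^ m) (geom b (S (S m)))
    ((b - 1) * b ^ m + geom b (S m) * ln b).
Proof.
  pose proof (pow_b_gt0 m) as Hp.
  rewrite (geomS (S m)); simpl (b ^ S m).
  set (g := geom b (S m)) in *; set (p := b ^ m) in *.
  apply (is_RInt_antiderivative _ (fun x => x + g * ln (x - g)) (fun x => x / (x - g))).
  - nra.
  - intros x Hx; apply eann_C_anytime.
    rewrite (geomS (S m)); simpl (b ^ S m); unfold g, p in Hx; lra.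
  - intros x Hx; auto_derive; [lra|field; lra].
  - intros x Hx; apply (ex_derive_continuous (V := R_NormedModule)); auto_derive; lra.
  - replace (g + b * p - g) with (b * p) by ring; replace (g + p - g) with p by ring.
    rewrite ln_mult by lra; ring.
Qed.

Lemma eann_C_segment_integral_le m :
  exists v, is_RInt (eann_C b) (geom b (S m)) (geom b (S (S m))) v /\
    v <= (1 - 1 / (2 * b) + (1 + ln b) / (b - 1)) * (geom b (S (S m)) - geom b (S m)).
Proof.
  exists (geom b (S m) + b ^ m / 2 + ((b - 1) * b ^ m + geom b (S m) * ln b)).
  split; [exact (is_RInt_Chasles _ _ _ _ _ _
                   (is_RInt_eann_C_reuse m) (is_RInt_eann_C_anytime m))|].
  pose proof (pow_b_gt0 m); pose proof (geom_S_le m).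
  assert (Hln : 0 < ln b) by (rewrite <- ln_1; apply ln_increasing; lra).
  rewrite (geomS (S m)); simpl (b ^ S m).
  set (g := geom b (S m)) in *; set (p := b ^ m) in *.
  assert (Hg : (1 + ln b) * g <= (1 + ln b) * (b * p / (b - 1))).
  { apply Rmult_le_compat_l; [lra|apply Rle_div_r; lra]. }
  replace ((1 - 1 / (2 * b) + (1 + ln b) / (b - 1)) * (g + b * p - g))
    with (b * p - p / 2 + (1 + ln b) * (b * p / (b - 1))) by (field; lra).
  lra.
Qed.

Lemma eann_C_integral_le N :
  exists v, is_RInt (eann_C b) 1 (geom b (S N)) v /\
    v <= (1 - 1 / (2 * b) + (1 + ln b) / (b - 1)) * (geom b (S N) - 1).
Proof.
  induction N as [|N [v [Hv Hle]]].
  - exists 0; replace (geom b 1) with 1 by (simpl; ring).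
    split; [exact (is_RInt_point _ 1)|lra].
  - destruct (eann_C_segment_integral_le N) as [w [Hw Hwle]].
    exists (v + w); split; [exact (is_RInt_Chasles _ _ _ _ _ _ Hv Hw)|lra].
Qed.

End EANN.

Theorem proposition1 (b : R) (hb : 1 < b) :
  (forall B : R, 1 < B -> 1 < eann_C b B) /\
  is_lub (fun c => exists B : R, 1 <= B /\ c = eann_C b B) (2 + 1 / (b - 1)) /\
  (forall N : nat, (1 <= N)%nat ->
     ex_RInt (eann_C b) 1 (geom b (S N)) /\
     RInt (eann_C b) 1 (geom b (S N)) / (geom b (S N) - 1)
       <= 1 - 1 / (2 * b) + (1 + ln b) / (b - 1)).
Proof.
  split; [exact (eann_C_gt1 b hb)|].
  split; [exact (eann_C_lub b hb)|].
  intros N HN.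
  destruct (eann_C_integral_le b hb N) as [v [Hv Hle]].
  split; [exists v; exact Hv|].
  rewrite (is_RInt_unique _ _ _ _ Hv).
  assert (Hlen : geom b 2 <= geom b (S N)) by (apply geom_le; [exact hb|lia]).
  replace (geom b 2) with (1 + b) in Hlen by (simpl; ring).
  apply Rle_div_l; lra.
Qed.
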